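(* Let $\mathcal E_i\equiv1\to H_i\xrightarrow{\alpha_i}G_i\xrightarrow{\beta_i}K_i\to1$ ($i=1,2$) be central extensions of multiplicative Lie algebras that are isoclinic via $(\lambda,\mu)$. Then: (1) $\lambda(\beta_1(x))=\beta_2(\mu(x))$ for all $x\in{}^M[G_1,G_1]$; (2) $\mu({}^M[x,g_1])={}^M[\mu(x),g_2]$ for all $x\in{}^M[G_1,G_1]$, $g_1\in G_1$ and $g_2\in G_2$ with $\lambda(\beta_1(g_1))=\beta_2(g_2)$, where ${}^M[a,b]:=(a\star b)[a,b]$; (3) $\mu(\alpha_1(H_1)\cap{}^M[G_1,G_1])=\alpha_2(H_2)\cap{}^M[G_2,G_2]$.
   Context: A multiplicative Lie algebra is a group $(G,\cdot)$ with a binary operation $\star$ such that for all $x,y,z\in G$: $x\star x=1$; $x\star(yz)=(x\star y)\,{}^y(x\star z)$; $(xy)\star z={}^x(y\star z)(x\star z)$; $((x\star y)\star{}^yz)((y\star z)\star{}^zx)((z\star x)\star{}^xy)=1$; ${}^z(x\star y)={}^zx\star{}^zy$, where ${}^xy=xyx^{-1}$. $Z(G)$ is the group center, $LZ(G)=\{x: x\star y=1\ \forall y\}$, $\mathcal Z(G)=LZ(G)\cap Z(G)$; $[x,y]$ is the group commutator; ${}^M[G,G]=(G\star G)[G,G]$ with $G\star G$ the ideal generated by all $a\star b$. A central extension is a short exact sequence $1\to H\xrightarrow{\alpha}G\xrightarrow{\beta}K\to1$ of multiplicative Lie algebras with $\alpha(H)\subseteq\mathcal Z(G)$. Central extensions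 $\mathcal E_1,\mathcal E_2$ are isoclinic via $(\lambda,\mu)$ if $\lambda:K_1\to K_2$, $\mu:{}^M[G_1,G_1]\to{}^M[G_2,G_2]$ are multiplicative Lie algebra isomorphisms with $\mu([g,g'])=[h,h']$ and $\mu(g\star g')=h\star h'$ whenever $g,g'\in G_1$, $h,h'\in G_2$ satisfy $\beta_2(h)=\lambda\beta_1(g)$, $\beta_2(h')=\lambda\beta_1(g')$. *)

Set Implicit Arguments.

(* A multiplicative Lie algebra: a group (carrier, mul, one, inv) with a
   binary operation star satisfying the five axioms of the paper.
   Conjugation: ^x y = x y x^{-1}. *)
Record MLA := {
  carrier :> Type;
  mul : carrier -> carrier -> carrier;
  one : carrier;
  inv : carrier -> carrier;
  star : carrier -> carrier -> carrier;
  mulA : forall x y z, mul x (mul y z) = mul (mul x y) z;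
  mul1g : forall x, mul one x = x;
  mulVg : forall x, mul (inv x) x = one;
  star_xx : forall x, star x x = one;
  star_mulr : forall x y z,
    star x (mul y z) = mul (star x y) (mul (mul y (star x z)) (inv y));
  star_mull : forall x y z,
    star (mul x y) z = mul (mul (mul x (star y z)) (inv x)) (star x z);
  star_jacobi : forall x y z,
    mul (mul (star (star x y) (mul (mul y z) (inv y)))
             (star (star y z) (mul (mul z x) (inv z))))
        (star (star z x) (mul (mul x y) (inv x))) = one;
  star_conj : forall x y z,
    mul (mul z (star x y)) (inv z)
    = star (mul (mul z x) (inv z)) (mul (mul z y) (inv z))
}.

Arguments mul {m}.
Arguments inv {m}.
Arguments star {m}.
Arguments one m : clear implicits.

Section Defs.
Context {G : MLA}.

Definition conj (x y : G) : G := mul (mul x y) (inv x).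
Definition comm (x y : G) : G := mul (mul (mul x y) (inv x)) (inv y).
Definition Mbr (a b : G) : G := mul (star a b) (comm a b).

Definition is_subgroup (S : G -> Prop) : Prop :=
  S (one G) /\ (forall x y, S x -> S y -> S (mul x y)) /\ (forall x, S x -> S (inv x)).

Definition is_ideal (S : G -> Prop) : Prop :=
  is_subgroup S /\ (forall g s, S s -> S (conj g s)) /\ (forall g s, S s -> S (star g s)).

Definition star_ideal (x : G) : Prop :=
  forall S, is_ideal S -> (forall a b, S (star a b)) -> S x.

Definition comm_subgroup (x : G) : Prop :=
  forall S, is_subgroup S -> (forall a b, S (comm a b)) -> S x.

Definition Mcomm (x : G) : Prop :=
  exists a b, star_ideal a /\ comm_subgroup b /\ x = mul a b.

Definition in_center (x : G) : Prop := forall y, mul x y = mul y x.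
Definition in_LZ (x : G) : Prop := forall y, star x y = one G.
Definition in_MZ (x : G) : Prop := in_LZ x /\ in_center x.
End Defs.

Definition is_hom {G1 G2 : MLA} (f : G1 -> G2) : Prop :=
  (forall x y, f (mul x y) = mul (f x) (f y)) /\
  (forall x y, f (star x y) = star (f x) (f y)).

Definition is_iso {G1 G2 : MLA} (f : G1 -> G2) : Prop :=
  is_hom f /\ (forall x y, f x = f y -> x = y) /\ (forall y, exists x, f x = y).

Definition central_ext {H G K : MLA} (a : H -> G) (b : G -> K) : Prop :=
  is_hom a /\ is_hom b /\
  (forall x y, a x = a y -> x = y) /\
  (forall k, exists g, b g = k) /\
  (forall g, b g = one K <-> exists h, a h = g) /\
  (forall h, in_MZ (a h)).

(* mu : ^M[G1,G1] -> ^M[G2,G2] is an isomorphism of multiplicative Lie algebras,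
   represented as a function G1 -> G2 whose values outside ^M[G1,G1] are irrelevant *)
Definition Mcomm_iso {G1 G2 : MLA} (mu : G1 -> G2) : Prop :=
  (forall x, Mcomm x -> Mcomm (mu x)) /\
  (forall x y, Mcomm x -> Mcomm y -> mu (mul x y) = mul (mu x) (mu y)) /\
  (forall x y, Mcomm x -> Mcomm y -> mu (star x y) = star (mu x) (mu y)) /\
  (forall x y, Mcomm x -> Mcomm y -> mu x = mu y -> x = y) /\
  (forall y, Mcomm y -> exists x, Mcomm x /\ mu x = y).

Definition isoclinic {H1 G1 K1 H2 G2 K2 : MLA}
  (a1 : H1 -> G1) (b1 : G1 -> K1) (a2 : H2 -> G2) (b2 : G2 -> K2)
  (lam : K1 -> K2) (mu : G1 -> G2) : Prop :=
  is_iso lam /\ Mcomm_iso mu /\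
  (forall (g g' : G1) (h h' : G2),
     b2 h = lam (b1 g) -> b2 h' = lam (b1 g') ->
     mu (comm g g') = comm h h' /\ mu (star g g') = star h h').


(* Both [fun x => lam (b1 x)] and [fun x => b2 (mu x)] are multiplicative on
   ^M[G1,G1], so the set where they agree is a subgroup there.  Isoclinism makes
   them agree on stars and commutators; the stars generate G1 * G1 already as a
   subgroup, so they agree on all of ^M[G1,G1] = (G1 * G1)[G1,G1].  Everything
   else follows from this commuting square: (2) is the isoclinism condition for
   the pair (x, mu x), and (3) identifies the kernels of b1 and b2 inside
   ^M[G1,G1] and ^M[G2,G2] through the injectivity of lam. *)

Section GroupFacts.
Context {G : MLA}.
Implicit Types x y z : G.

Lemma mulgV x : mul x (inv x) = one G.
Proof.
  transitivity (mul (mul (inv (inv x)) (inv x)) (mul x (inv x))).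
  - rewrite mulVg. symmetry. apply mul1g.
  - rewrite <- mulA, (mulA G (inv x) x), mulVg, mul1g. apply mulVg.
Qed.

Lemma mulg1 x : mul x (one G) = x.
Proof. rewrite <- (mulVg G x), mulA, mulgV. apply mul1g. Qed.

Lemma mulgI x y z : mul x y = mul x z -> y = z.
Proof.
  intro E. rewrite <- (mul1g G y), <- (mul1g G z), <- (mulVg G x), <- !mulA, E.
  reflexivity.
Qed.

Lemma mulg_eq1_inv x y : mul x y = one G -> x = inv y.
Proof. intro E. rewrite <- (mulg1 x), <- (mulgV y), mulA, E. apply mul1g. Qed.

Lemma invK x : inv (inv x) = x.
Proof. symmetry. apply mulg_eq1_inv, mulgV. Qed.

Lemma invM x y : inv (mul x y) = mul (inv y) (inv x).
Proof.
  symmetry. apply mulg_eq1_inv.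
  rewrite <- mulA, (mulA G (inv x)), mulVg, mul1g. apply mulVg.
Qed.

Lemma conj_mul z x y : conj z (mul x y) = mul (conj z x) (conj z y).
Proof.
  unfold conj. rewrite !mulA. f_equal. rewrite <- !mulA. do 2 f_equal.
  rewrite mulA, mulVg, mul1g. reflexivity.
Qed.

End GroupFacts.

Section Homomorphisms.
Context {G1 G2 : MLA}.

Definition mul_hom_on (S : G1 -> Prop) (f : G1 -> G2) : Prop :=
  forall x y, S x -> S y -> f (mul x y) = mul (f x) (f y).

Context {S : G1 -> Prop}.
Hypothesis S_subgroup : is_subgroup S.

Lemma hom_on_one f : mul_hom_on S f -> f (one G1) = one G2.
Proof.
  destruct S_subgroup as [S1 _]. intro Hf.
  apply (mulgI (f (one G1))). rewrite <- Hf, mul1g, mulg1 by exact S1. reflexivity.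
Qed.

Lemma hom_on_inv f x : mul_hom_on S f -> S x -> f (inv x) = inv (f x).
Proof.
  destruct S_subgroup as [_ [_ SV]]. intros Hf Sx.
  apply mulg_eq1_inv. rewrite <- Hf, mulVg by auto. exact (hom_on_one f Hf).
Qed.

Lemma is_subgroup_eq_on f g :
  mul_hom_on S f -> mul_hom_on S g -> is_subgroup (fun x => S x /\ f x = g x).
Proof.
  destruct S_subgroup as [S1 [SM SV]]. intros Hf Hg. split; [| split].
  - split; [exact S1 |]. rewrite (hom_on_one f Hf), (hom_on_one g Hg). reflexivity.
  - intros x y [Sx Ex] [Sy Ey].
    split; [apply SM; assumption |]. rewrite Hf, Hg, Ex, Ey by assumption. reflexivity.
  - intros x [Sx Ex].
    split; [apply SV; assumption |].
    rewrite (hom_on_inv f x Hf), (hom_on_inv g x Hg), Ex by assumption. reflexivity.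
Qed.

End Homomorphisms.

Lemma is_subgroup_all {G : MLA} : is_subgroup (fun _ : G => True).
Proof. repeat split. Qed.

Section TotalHomomorphisms.
Context {G1 G2 : MLA} (f : G1 -> G2).
Hypothesis f_mul : forall x y, f (mul x y) = mul (f x) (f y).

Let f_mul_on : mul_hom_on (fun _ => True) f.
Proof. intros x y _ _. apply f_mul. Qed.

Lemma hom_one : f (one G1) = one G2.
Proof. exact (hom_on_one is_subgroup_all f f_mul_on). Qed.

Lemma hom_inv x : f (inv x) = inv (f x).
Proof. exact (hom_on_inv is_subgroup_all f x f_mul_on I). Qed.

Lemma hom_comm x y : f (comm x y) = comm (f x) (f y).
Proof. unfold comm. rewrite !f_mul, !hom_inv. reflexivity. Qed.

Lemma is_subgroup_preim (S : G2 -> Prop) :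
  is_subgroup S -> is_subgroup (fun x => S (f x)).
Proof.
  intros [S1 [SM SV]]. split; [| split].
  - rewrite hom_one. exact S1.
  - intros x y Sx Sy. rewrite f_mul. apply SM; assumption.
  - intros x Sx. rewrite hom_inv. apply SV; assumption.
Qed.

End TotalHomomorphisms.

Section MLAIdeals.
Context {G : MLA}.

Definition star_subgroup (x : G) : Prop :=
  forall S, is_subgroup S -> (forall a b, S (star a b)) -> S x.

(* Conjugation maps stars to stars ([star_conj]), so the subgroup generated by
   the stars is normal, hence already an ideal. *)
Lemma is_ideal_star_subgroup : is_ideal star_subgroup.
Proof.
  split; [split; [| split] | split].
  - intros S [S1 _] _. exact S1.
  - intros y z Hy Hz S HS Hst. apply (proj1 (proj2 HS)); [apply Hy | apply Hz]; assumption.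
  - intros y Hy S HS Hst. apply (proj2 (proj2 HS)), Hy; assumption.
  - intros g s Hs S HS Hst.
    apply (Hs (fun y => S (conj g y))).
    + apply is_subgroup_preim; [apply conj_mul | exact HS].
    + intros a b. unfold conj. rewrite star_conj. apply Hst.
  - intros g s _ S _ Hst. apply Hst.
Qed.

Lemma star_ideal_star_subgroup (x : G) : star_ideal x -> star_subgroup x.
Proof.
  intro Hx. apply Hx; [exact is_ideal_star_subgroup |].
  intros a b S _ Hst. apply Hst.
Qed.

Lemma star_ideal_one : @star_ideal G (one G).
Proof. intros S [[S1 _] _] _. exact S1. Qed.

Lemma star_ideal_star (a b : G) : star_ideal (star a b).
Proof. intros S _ HS. apply HS. Qed.

Lemma star_ideal_mul (x y : G) : star_ideal x -> star_ideal y -> star_ideal (mul x y).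
Proof.
  intros Hx Hy S HS Hst. specialize (Hx S HS Hst). specialize (Hy S HS Hst).
  destruct HS as [[_ [SM _]] _]. exact (SM _ _ Hx Hy).
Qed.

Lemma star_ideal_inv (x : G) : star_ideal x -> star_ideal (inv x).
Proof.
  intros Hx S HS Hst. specialize (Hx S HS Hst).
  destruct HS as [[_ [_ SV]] _]. exact (SV _ Hx).
Qed.

Lemma star_ideal_conj (g x : G) : star_ideal x -> star_ideal (conj g x).
Proof.
  intros Hx S HS Hst. specialize (Hx S HS Hst).
  destruct HS as [_ [SJ _]]. exact (SJ _ _ Hx).
Qed.

Lemma comm_subgroup_one : @comm_subgroup G (one G).
Proof. intros S [S1 _] _. exact S1. Qed.

Lemma comm_subgroup_comm (a b : G) : comm_subgroup (comm a b).
Proof. intros S _ HS. apply HS. Qed.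

Lemma comm_subgroup_mul (x y : G) :
  comm_subgroup x -> comm_subgroup y -> comm_subgroup (mul x y).
Proof.
  intros Hx Hy S HS Hc. specialize (Hx S HS Hc). specialize (Hy S HS Hc).
  destruct HS as [_ [SM _]]. exact (SM _ _ Hx Hy).
Qed.

Lemma comm_subgroup_inv (x : G) : comm_subgroup x -> comm_subgroup (inv x).
Proof.
  intros Hx S HS Hc. specialize (Hx S HS Hc).
  destruct HS as [_ [_ SV]]. exact (SV _ Hx).
Qed.

Lemma Mcomm_star (a b : G) : Mcomm (star a b).
Proof.
  exists (star a b), (one G).
  split; [apply star_ideal_star | split; [apply comm_subgroup_one | symmetry; apply mulg1]].
Qed.

Lemma Mcomm_comm (a b : G) : Mcomm (comm a b).
Proof.
  exists (one G), (comm a b).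
  split; [apply star_ideal_one | split; [apply comm_subgroup_comm | symmetry; apply mul1g]].
Qed.

(* (a b)(a' b') = (a (b a' b^-1)) (b b') and (a b)^-1 = (b^-1 a^-1 b) b^-1,
   using that G * G is normal. *)
Lemma is_subgroup_Mcomm : is_subgroup (@Mcomm G).
Proof.
  repeat split.
  - exists (one G), (one G).
    split; [apply star_ideal_one | split; [apply comm_subgroup_one | symmetry; apply mulg1]].
  - intros x y [a [b [Ha [Hb ->]]]] [a' [b' [Ha' [Hb' ->]]]].
    exists (mul a (conj b a')), (mul b b'). repeat split.
    + apply star_ideal_mul, star_ideal_conj; assumption.
    + apply comm_subgroup_mul; assumption.
    + unfold conj. rewrite <- !mulA, (mulA G (inv b) b), mulVg, mul1g. reflexivity.
  - intros x [a [b [Ha [Hb ->]]]].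
    exists (conj (inv b) (inv a)), (inv b). repeat split.
    + apply star_ideal_conj, star_ideal_inv; assumption.
    + apply comm_subgroup_inv; assumption.
    + unfold conj. rewrite invK, invM, <- !mulA, mulgV, mulg1. reflexivity.
Qed.

End MLAIdeals.

Section Isoclinism.
Context {H1 G1 K1 H2 G2 K2 : MLA}.
Context {a1 : H1 -> G1} {b1 : G1 -> K1} {a2 : H2 -> G2} {b2 : G2 -> K2}.
Context {lam : K1 -> K2} {mu : G1 -> G2}.

Hypothesis b1_hom : is_hom b1.
Hypothesis b2_hom : is_hom b2.
Hypothesis lam_hom : is_hom lam.
Hypothesis b2_surj : forall k, exists g, b2 g = k.
Hypothesis mu_mul : mul_hom_on Mcomm mu.
Hypothesis mu_compat : forall (g g' : G1) (h h' : G2),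
  b2 h = lam (b1 g) -> b2 h' = lam (b1 g') ->
  mu (comm g g') = comm h h' /\ mu (star g g') = star h h'.

Lemma lam_b1_star (c d : G1) : lam (b1 (star c d)) = b2 (mu (star c d)).
Proof.
  destruct b1_hom as [_ b1S], b2_hom as [_ b2S], lam_hom as [_ lamS].
  destruct (b2_surj (lam (b1 c))) as [h Hh], (b2_surj (lam (b1 d))) as [h' Hh'].
  destruct (mu_compat c d h h' Hh Hh') as [_ ->].
  rewrite b1S, lamS, b2S, Hh, Hh'. reflexivity.
Qed.

Lemma lam_b1_comm (c d : G1) : lam (b1 (comm c d)) = b2 (mu (comm c d)).
Proof.
  destruct b1_hom as [b1M _], b2_hom as [b2M _], lam_hom as [lamM _].
  destruct (b2_surj (lam (b1 c))) as [h Hh], (b2_surj (lam (b1 d))) as [h' Hh'].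
  destruct (mu_compat c d h h' Hh Hh') as [-> _].
  rewrite !hom_comm, Hh, Hh' by assumption. reflexivity.
Qed.

Lemma lam_b1_Mcomm (x : G1) : Mcomm x -> lam (b1 x) = b2 (mu x).
Proof.
  destruct b1_hom as [b1M _], b2_hom as [b2M _], lam_hom as [lamM _].
  set (Q := fun x => Mcomm x /\ lam (b1 x) = b2 (mu x)).
  assert (Q_subgroup : is_subgroup Q).
  { apply is_subgroup_eq_on; [apply is_subgroup_Mcomm | | ].
    - intros y z _ _. rewrite b1M, lamM. reflexivity.
    - intros y z Hy Hz. rewrite mu_mul, b2M by assumption. reflexivity. }
  intros [a [b [Ha [Hb ->]]]].
  apply Q_subgroup.
  - apply (star_ideal_star_subgroup _ Ha); [exact Q_subgroup |].
    intros c d. split; [apply Mcomm_star | apply lam_b1_star].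
  - apply Hb; [exact Q_subgroup |].
    intros c d. split; [apply Mcomm_comm | apply lam_b1_comm].
Qed.

Lemma mu_Mbr (x g1 : G1) (g2 : G2) :
  Mcomm x -> lam (b1 g1) = b2 g2 -> mu (Mbr x g1) = Mbr (mu x) g2.
Proof.
  intros Hx Hg. unfold Mbr.
  rewrite mu_mul by (apply Mcomm_star || apply Mcomm_comm).
  destruct (mu_compat x g1 (mu x) g2) as [-> ->].
  - symmetry. apply lam_b1_Mcomm, Hx.
  - symmetry. exact Hg.
  - reflexivity.
Qed.

Hypothesis b1_ker : forall g, b1 g = one K1 <-> exists h, a1 h = g.
Hypothesis b2_ker : forall g, b2 g = one K2 <-> exists h, a2 h = g.
Hypothesis lam_inj : forall k k', lam k = lam k' -> k = k'.
Hypothesis mu_Mcomm : forall x, Mcomm x -> Mcomm (mu x).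
Hypothesis mu_onto : forall y, Mcomm y -> exists x, Mcomm x /\ mu x = y.

Lemma mu_image_ker_Mcomm (y : G2) :
  (exists x : G1, (exists h, a1 h = x) /\ Mcomm x /\ mu x = y) <->
  ((exists h, a2 h = y) /\ Mcomm y).
Proof.
  destruct lam_hom as [lamM _].
  split.
  - intros [x [Kx [Hx <-]]]. split; [| apply mu_Mcomm, Hx].
    apply b2_ker. rewrite <- lam_b1_Mcomm by exact Hx.
    apply b1_ker in Kx. rewrite Kx. exact (hom_one lam lamM).
  - intros [Ky Hy]. destruct (mu_onto y Hy) as [x [Hx <-]].
    exists x. repeat split; [| exact Hx].
    apply b1_ker, lam_inj. rewrite lam_b1_Mcomm by exact Hx.
    apply b2_ker in Ky. rewrite Ky. symmetry. exact (hom_one lam lamM).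
Qed.

End Isoclinism.

Theorem lemma4p2 (H1 G1 K1 H2 G2 K2 : MLA)
  (a1 : H1 -> G1) (b1 : G1 -> K1) (a2 : H2 -> G2) (b2 : G2 -> K2)
  (lam : K1 -> K2) (mu : G1 -> G2) :
  central_ext a1 b1 -> central_ext a2 b2 ->
  isoclinic a1 b1 a2 b2 lam mu ->
  (forall x : G1, Mcomm x -> lam (b1 x) = b2 (mu x)) /\
  (forall (x g1 : G1) (g2 : G2), Mcomm x -> lam (b1 g1) = b2 g2 ->
     mu (Mbr x g1) = Mbr (mu x) g2) /\
  (forall y : G2,
     (exists x : G1, (exists h, a1 h = x) /\ Mcomm x /\ mu x = y) <->
     ((exists h, a2 h = y) /\ Mcomm y)).
Proof.
  intros [_ [b1_hom [_ [_ [b1_ker _]]]]] [_ [b2_hom [_ [b2_surj [b2_ker _]]]]]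
         [[lam_hom [lam_inj _]] [[mu_Mcomm [mu_mul [_ [_ mu_onto]]]] mu_compat]].
  split; [| split].
  - exact (lam_b1_Mcomm b1_hom b2_hom lam_hom b2_surj mu_mul mu_compat).
  - exact (mu_Mbr b1_hom b2_hom lam_hom b2_surj mu_mul mu_compat).
  - exact (mu_image_ker_Mcomm b1_hom b2_hom lam_hom b2_surj mu_mul mu_compat
             b1_ker b2_ker lam_inj mu_Mcomm mu_onto).
Qed.
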